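(* For a locally compact group $G$ the following are equivalent: (i) $G$ admits a uniform, coarsely geodesic metric; (ii) $G$ admits a uniform, quasi-geodesic metric; (iii) $G$ admits a left-invariant, proper, quasi-geodesic metric; (iv) $G$ admits a left-invariant proper metric for which it is quasi-isometric to a graph of bounded degree; (v) $G$ is compactly generated.
   Context: A metric $d$ on $G$ is uniform if for sequences $(g_n,h_n)$, $d(g_n,h_n)\to\infty$ iff $g_n^{-1}h_n$ eventually leaves every compact subset. Proper: closed balls are compact. For $b>0$, a $b$-chain from $x$ to $y$ is $x=x_0,\dots,x_m=y$ with $d(x_i,x_{i+1})\le b$; $d_b(x,y)=\inf\sum_i d(x_i,x_{i-1})$ over $b$-chains. $(X,d)$ is quasi-geodesic if for some $b>0$ the identity $(X,d)\to(X,d_b)$ is a quasi-isometry; coarsely geodesic if for some $b>0$, $d_b$ is finite and for every $R$ there is $R'$ with $d(x,y)\le R\Rightarrow d_b(x,y)\le R'$ (the identity $(X,d_b)\to(X,d)$ is a uniform embedding). A quasi-isometry $F$ satisfies $C^{-1}d(x,y)-C\le d(F(x),F(y))\le Cd(x,y)+C$ and has image at bounded distance from every point; graphs carry their path metric. *)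

From HB Require Import structures.
From mathcomp Require Import all_boot all_order all_algebra.
From mathcomp Require Import all_classical all_reals ereal topology normedtype.
Set Implicit Arguments. Unset Strict Implicit. Unset Printing Implicit Defensive.
Import Order.TTheory GRing.Theory Num.Theory.
Local Open Scope classical_set_scope.
Local Open Scope ring_scope.

Definition is_lc_group (T : topologicalType) (mul : T -> T -> T) (inv : T -> T)
    (e : T) : Prop :=
  [/\ (forall x y z, mul x (mul y z) = mul (mul x y) z),
      (forall x, mul e x = x /\ mul x e = x),
      (forall x, mul (inv x) x = e /\ mul x (inv x) = e),
      continuous (fun p : T * T => mul p.1 p.2) /\ continuous inv &
      hausdorff_space T /\
      (forall x : T, exists K : set T, compact K /\ nbhs x K)].

Definition compactly_generated (T : topologicalType) (mul : T -> T -> T)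
    (inv : T -> T) (e : T) : Prop :=
  exists K : set T, compact K /\
    forall H : set T, H e -> (forall x y, H x -> H y -> H (mul x y)) ->
      (forall x, H x -> H (inv x)) -> K `<=` H -> H = setT.

Definition is_metric (R : realType) (T : Type) (d : T -> T -> R) : Prop :=
  [/\ (forall x y, 0 <= d x y), (forall x y, d x y = 0 <-> x = y),
      (forall x y, d x y = d y x) &
      (forall x y z, d x z <= d x y + d y z)].

Definition uniform_metric (R : realType) (T : topologicalType)
    (mul : T -> T -> T) (inv : T -> T) (d : T -> T -> R) : Prop :=
  forall g h : nat -> T,
    (forall M : R, exists N, forall n, (N <= n)%N -> M < d (g n) (h n)) <->
    (forall K : set T, compact K ->
       exists N, forall n, (N <= n)%N -> ~ K (mul (inv (g n)) (h n))).

Definition left_invariant (R : realType) (T : Type) (mul : T -> T -> T)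
    (d : T -> T -> R) : Prop :=
  forall g x y, d (mul g x) (mul g y) = d x y.

Definition proper_metric (R : realType) (T : topologicalType)
    (d : T -> T -> R) : Prop :=
  forall (x : T) (r : R), compact [set y | d x y <= r].

(* b-chains: x = x0, x1, ..., xm = y with the list l = [x1; ...; xm]. *)
Fixpoint chain_ok (R : realType) (T : Type) (d : T -> T -> R) (b : R)
    (x y : T) (l : seq T) : Prop :=
  match l with
  | [::] => x = y
  | z :: l' => d x z <= b /\ chain_ok d b z y l'
  end.

Fixpoint chain_len (R : realType) (T : Type) (d : T -> T -> R) (x : T)
    (l : seq T) : R :=
  match l with
  | [::] => 0
  | z :: l' => d x z + chain_len d z l'
  end.

Definition chain_dist (R : realType) (T : Type) (d : T -> T -> R) (b : R)
    (x y : T) : \bar R :=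
  ereal_inf [set (chain_len d x l)%:E | l in [set l | chain_ok d b x y l]].

Definition quasi_geodesic (R : realType) (T : Type) (d : T -> T -> R) : Prop :=
  exists b : R, 0 < b /\ exists C : R, 0 < C /\
    forall x y : T,
      ((C^-1 * d x y - C)%:E <= chain_dist d b x y)%E /\
      (chain_dist d b x y <= (C * d x y + C)%:E)%E.

Definition coarsely_geodesic (R : realType) (T : Type) (d : T -> T -> R) : Prop :=
  exists b : R, 0 < b /\
    (forall x y : T, (chain_dist d b x y < +oo)%E) /\
    forall r : R, exists r' : R, forall x y : T,
      d x y <= r -> (chain_dist d b x y <= r'%:E)%E.

Definition is_graph (V : Type) (adj : V -> V -> Prop) : Prop :=
  (forall u v, adj u v -> adj v u) /\ (forall v, ~ adj v v).

(* list membership for an arbitrary type (no decidable equality needed) *)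
Fixpoint in_list (V : Type) (w : V) (l : seq V) : Prop :=
  match l with [::] => False | z :: l' => z = w \/ in_list w l' end.

Definition bounded_degree (V : Type) (adj : V -> V -> Prop) : Prop :=
  exists k : nat, forall v : V, exists l : seq V,
    (size l <= k)%N /\ forall w, adj v w -> in_list w l.

Inductive walk (V : Type) (adj : V -> V -> Prop) : nat -> V -> V -> Prop :=
  | walk0 v : walk adj 0 v v
  | walkS n u w v : adj u w -> walk adj n w v -> walk adj n.+1 u v.

Definition graph_dist (R : realType) (V : Type) (adj : V -> V -> Prop)
    (u v : V) : \bar R :=
  ereal_inf [set ((n%:R : R)%:E) | n in [set n | walk adj n u v]].

Definition qi_to_graph (R : realType) (T V : Type) (d : T -> T -> R)
    (adj : V -> V -> Prop) (F : T -> V) : Prop :=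
  exists C : R, 0 < C /\
    (forall x y : T,
       ((C^-1 * d x y - C)%:E <= graph_dist R adj (F x) (F y))%E /\
       (graph_dist R adj (F x) (F y) <= (C * d x y + C)%:E)%E) /\
    (forall v : V, exists x : T, (graph_dist R adj (F x) v <= C%:E)%E).

From mathcomp Require Import all_boot all_order all_algebra.
From mathcomp Require Import all_classical all_reals ereal topology normedtype.
From mathcomp Require Import lra zify.
Import Order.TTheory GRing.Theory Num.Theory.
Local Open Scope classical_set_scope.
Local Open Scope ring_scope.

(* Each of (i)-(iv) provides a scale b such that every point is joined to e by
   a b-chain, and a compact set K containing x^-1 y whenever d(x, y) <= b: for
   a left-invariant proper metric K is the closed b-ball at e; for a uniform
   metric K exists because an r-bounded family of displacements with no finite
   cover by translates of a compact neighbourhood of e would contain a sequence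
   escaping every compact set.  The increments of the chains lie in K, so K
   generates G.
   Conversely, if G is generated by a compact set, it is generated by a compact
   symmetric neighbourhood S of e; the interiors of the powers S^n then exhaust
   G, so every compact set lies in some S^n.  Hence the word metric of S is
   left-invariant, proper, uniform and 1-geodesic, and a maximal 2-separated
   set of points, with edges between points at distance at most 5, is a graph
   of bounded degree quasi-isometric to G. *)

Lemma compact_cover_seq (T : topologicalType) (I : eqType) (A : set T)
    (f : I -> set T) :
  compact A -> (forall i, open (f i)) -> (forall x, A x -> exists i, f i x) ->
  exists l : seq I, forall x, A x -> exists2 i, i \in l & f i x.
Proof.
move=> /compact_near_coveringP cA fo fc.
(* Lists of indices, directed by inclusion, form a filter; near-covering
   compactness then yields a single list that covers near every point of A. *)
pose F := filter_from [set: seq I] (fun l => [set l' : seq I | {subset l <= l'}]).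
have FF : Filter F.
  apply: filter_from_filter; first by exists [::].
  move=> l1 l2 _ _; exists (l1 ++ l2) => //= l' Hl; split => z Hz; apply: Hl;
  by rewrite mem_cat Hz ?orbT.
have near_cover x : A x -> \forall x' \near x & l \near F,
    (fun l x => exists2 i, i \in l & f i x) l x'.
  move=> Ax; have [i fi] := fc x Ax.
  exists (f i, [set l' : seq I | {subset [:: i] <= l'}]).
    split => /=; first exact: open_nbhs_nbhs.
    by exists [:: i].
  case=> y l /= [fy Hl]; exists i => //; apply: Hl; by rewrite inE.
have [l _ Hl] := cA (seq I) F _ FF near_cover.
by exists l => x Ax; apply: (Hl l).
Qed.

Lemma maximal_net {X : Type} {close : X -> X -> Prop} :
  (forall x, close x x) -> (forall x y, close x y -> close y x) ->
  exists A : set X, (forall x y, A x -> A y -> close x y -> x = y) /\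
    forall x, exists2 a, A a & close x a.
Proof.
move=> refl sym.
pose sep (A : set X) := forall x y, A x -> A y -> close x y -> x = y.
have [A [sepA maxA]] : exists A, sep A /\ forall B, A `<` B -> ~ sep B.
  apply: Zorn_bigcup => F FS tF x y [X1 FX1 X1x] [X2 FX2 X2y] xy.
  case: (tF X1 X2 FX1 FX2) => [X12|X21].
    by apply: (FS X2 FX2) => //; apply: X12.
  by apply: (FS X1 FX1) => //; apply: X21.
exists A; split => // x; apply: contrapT => far.
apply: (maxA (A `|` [set x])).
  split; first by move=> y Ay; left.
  by move=> /(_ x (or_intror erefl)) Ax; apply: far; exists x.
move=> y z [Ay|->] [Az|->] yz //.
- exact: sepA.
- by exfalso; apply: far; exists y => //; apply: sym.
- by exfalso; apply: far; exists z.
Qed.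

Lemma in_list_map (X : eqType) (Y : Type) (f : X -> Y) (x : X) (s : seq X) :
  x \in s -> in_list (f x) (map f s).
Proof.
elim: s => [//|y s IH]; rewrite in_cons => /orP[/eqP ->|xs] /=; first by left.
by right; apply: IH.
Qed.

Section Walks.
Context {V : Type} {adj : V -> V -> Prop} {R : realType}.

Lemma walk_cat {n m u w v} :
  walk adj n u w -> walk adj m w v -> walk adj (n + m) u v.
Proof.
elim=> [//|n' u' w' v' huw hw IH] hm.
by rewrite addSn; apply: walkS huw (IH hm).
Qed.

Lemma walk_rev {n u v} :
  (forall a b, adj a b -> adj b a) -> walk adj n u v -> walk adj n v u.
Proof.
move=> adj_sym; elim=> [v'|n' u' w' v' huw hw IH]; first exact: walk0.
rewrite -addn1; apply: walk_cat IH _.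
exact: walkS (adj_sym _ _ huw) (walk0 _ _).
Qed.

Lemma graph_dist_le_walk {n u v} :
  walk adj n u v -> (graph_dist R adj u v <= (n%:R)%:E)%E.
Proof. by move=> hw; apply: ereal_inf_lbound; exists n. Qed.

Lemma walk_of_graph_dist_le {u v} {c : R} :
  (graph_dist R adj u v <= c%:E)%E -> exists n, walk adj n u v /\ n%:R <= c + 1.
Proof.
move=> h.
have : (graph_dist R adj u v < (c + 1)%:E)%E.
  by apply: le_lt_trans h _; rewrite lte_fin ltrDl.
case/ereal_inf_lt => _ [n hn <-]; rewrite lte_fin => hlt.
by exists n; split => //; apply: ltW.
Qed.

Lemma graph_dist_ge u v (x : \bar R) :
  (forall n, walk adj n u v -> (x <= (n%:R)%:E)%E) -> (x <= graph_dist R adj u v)%E.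
Proof. by move=> h; apply/ereal_infP => _ [n hn <-]; apply: h. Qed.

End Walks.

Section Chains.
Context {R : realType} {T : Type} {d : T -> T -> R} {b : R}.

Lemma dist_le_chain_len {l x y} :
  is_metric d -> chain_ok d b x y l -> d x y <= chain_len d x l.
Proof.
case=> _ d_eq0 _ d_tri; elim: l x => [|z l IH] x /=.
  by move=> ->; rewrite (proj2 (d_eq0 y y) erefl).
case=> _ hc; apply: le_trans (d_tri x z y) _; rewrite lerD2l; exact: IH.
Qed.

Lemma chain_of_chain_dist_lt {x y} :
  (chain_dist d b x y < +oo)%E -> exists l, chain_ok d b x y l.
Proof.
move=> h; apply: contrapT => no_chain; move: h.
suff -> : chain_dist d b x y = +oo%E by [].
rewrite /chain_dist.
have -> : [set (chain_len d x l)%:E | l in [set l | chain_ok d b x y l]] = set0.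
  by apply/seteqP; split => // z [l hl _]; apply: no_chain; exists l.
exact: ereal_inf0.
Qed.

End Chains.

Inductive setpow (T : Type) (mul : T -> T -> T) (e : T) (S : set T) :
    nat -> T -> Prop :=
  | setpow0 : setpow T mul e S 0 e
  | setpowS n s x : S s -> setpow T mul e S n x -> setpow T mul e S n.+1 (mul s x).
Arguments setpow {T}.

Section LocallyCompactGroup.
Context {T : topologicalType} {mul : T -> T -> T} {inv : T -> T} {e : T}.
Hypothesis HG : is_lc_group mul inv e.

Lemma mulA x y z : mul x (mul y z) = mul (mul x y) z.
Proof. by case: HG. Qed.
Lemma mul1x x : mul e x = x. Proof. by case: HG => _ /(_ x) []. Qed.
Lemma mulx1 x : mul x e = x. Proof. by case: HG => _ /(_ x) []. Qed.
Lemma mulVx x : mul (inv x) x = e. Proof. by case: HG => _ _ /(_ x) []. Qed.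
Lemma mulxV x : mul x (inv x) = e. Proof. by case: HG => _ _ /(_ x) []. Qed.

Lemma mulK x y : mul (inv x) (mul x y) = y.
Proof. by rewrite mulA mulVx mul1x. Qed.

Lemma mulKV x y : mul x (mul (inv x) y) = y.
Proof. by rewrite mulA mulxV mul1x. Qed.

Lemma inv_unique a b : mul a b = e -> b = inv a.
Proof. by move=> ab; rewrite -(mulK a b) ab mulx1. Qed.

Lemma invK x : inv (inv x) = x.
Proof. by apply/esym/inv_unique; rewrite mulVx. Qed.

Lemma invM x y : inv (mul x y) = mul (inv y) (inv x).
Proof.
by apply/esym/inv_unique; rewrite mulA -[mul (mul x y) _]mulA mulxV mulx1 mulxV.
Qed.

Lemma inv1 : inv e = e.
Proof. by apply/esym/inv_unique; rewrite mul1x. Qed.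

Lemma ldiv_lmul x y z : mul (inv (mul (inv x) y)) (mul (inv x) z) = mul (inv y) z.
Proof. by rewrite invM invK -mulA mulKV. Qed.

Lemma mul_continuous : continuous (fun p : T * T => mul p.1 p.2).
Proof. by case: HG => _ _ _ []. Qed.

Lemma inv_continuous : continuous inv.
Proof. by case: HG => _ _ _ []. Qed.

Lemma lmul_continuous a : continuous (mul a).
Proof.
move=> y; apply: (@continuous_comp _ _ _ (fun z => (a, z))
  (fun p : T * T => mul p.1 p.2)); last exact: mul_continuous.
by apply: cvg_pair; [exact: cvg_cst | exact: cvg_id].
Qed.

Lemma ldiv_continuous : continuous (fun p : T * T => mul (inv p.1) p.2).
Proof.
move=> p; apply: (@continuous_comp _ _ _ (fun p : T * T => (inv p.1, p.2))
  (fun p : T * T => mul p.1 p.2)); last exact: mul_continuous.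
apply: cvg_pair; last exact: cvg_snd.
by apply: continuous_comp; [exact: cvg_fst | exact: inv_continuous].
Qed.

Lemma compact_image (f : T -> T) A : continuous f -> compact A -> compact (f @` A).
Proof. by move=> fc; apply: continuous_compact; exact: continuous_subspaceT. Qed.

Lemma compact_setM A B : compact A -> compact B ->
  compact [set mul a b | a in A & b in B].
Proof.
move=> cA cB.
have -> : [set mul a b | a in A & b in B] = (fun p : T * T => mul p.1 p.2) @` (A `*` B).
  apply/seteqP; split => z.
  - by case=> a Aa [b Bb <-]; exists (a, b).
  - by case=> [[a b] [/= Aa Bb] <-]; exists a => //; exists b.
apply: continuous_compact; last exact: compact_setX.
by apply: continuous_subspaceT; exact: mul_continuous.
Qed.

Lemma nbhs_lmul a {U} : nbhs e U -> nbhs a [set y | U (mul (inv a) y)].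
Proof. by have := lmul_continuous (inv a) a; rewrite /continuous_at mulVx; apply. Qed.

Lemma open_lmul_preimage a W : open W -> open [set y | W (mul a y)].
Proof. by move=> oW; move/continuousP: (lmul_continuous a); apply. Qed.

Lemma nbhs1_ldiv_sub {U} : nbhs e U ->
  exists W, [/\ open W, W e & forall x y, W x -> W y -> U (mul (inv x) y)].
Proof.
move=> hU.
have := ldiv_continuous (e, e); rewrite /continuous_at /= inv1 mul1x => /(_ U hU).
case=> [[A1 A2]] /= [h1 h2] hA.
exists (interior (A1 `&` A2)); split.
- exact: open_interior.
- by apply: nbhs_singleton; apply: nbhs_interior; exact: filterI.
- move=> x y /nbhs_singleton [Ax _] /nbhs_singleton [_ Ay].
  exact: (hA (x, y)).
Qed.

Lemma compact_nbhs1 : exists U, compact U /\ nbhs e U.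
Proof. by case: HG => _ _ _ _ [_ /(_ e)]. Qed.

Lemma compact_translates (l : seq T) U : compact U ->
  compact [set z | exists2 y, y \in l & U (mul (inv y) z)].
Proof.
move=> cU; elim: l => [|y l IH].
  rewrite (_ : [set z | _] = set0); first exact: compact0.
  by apply/seteqP; split => z //= [].
rewrite (_ : [set z | _] =
  (mul y @` U) `|` [set z | exists2 y, y \in l & U (mul (inv y) z)]).
  by apply: compactU => //; apply: compact_image => //; exact: lmul_continuous.
apply/seteqP; split => z /=.
- case=> y0; rewrite in_cons => /orP[/eqP -> Uz|yl Uz].
    by left; exists (mul (inv y) z) => //; rewrite mulKV.
  by right; exists y0.
- case=> [[u Uu <-]|[y0 yl Uz]]; first by exists y; rewrite ?mem_head ?mulK.
  by exists y0 => //; rewrite in_cons yl orbT.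
Qed.

Lemma separated_seq_escapes {U} {a : nat -> T} : nbhs e U ->
  (forall m n, (m < n)%N -> ~ U (mul (inv (a m)) (a n))) ->
  forall K, compact K -> exists N, forall n, (N <= n)%N -> ~ K (a n).
Proof.
move=> hU a_sep K cK.
have [W [oW We hW]] := nbhs1_ldiv_sub hU.
have [l Kl] : exists l : seq T,
    forall z, K z -> exists2 x, x \in l & W (mul (inv x) z).
  apply: (@compact_cover_seq T T K (fun x => [set z | W (mul (inv x) z)]) cK).
    by move=> x; apply: open_lmul_preimage.
  by move=> z _; exists z => /=; rewrite mulVx.
(* Two distinct terms of [a] never lie in the same translate of W. *)
have Wx_once x : exists Nx, forall n, (Nx <= n)%N -> ~ W (mul (inv x) (a n)).
  case: (pselect (exists n, W (mul (inv x) (a n)))) => [[n Wn]|none].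
    exists n.+1 => m nm Wm; apply: (a_sep n m nm).
    by rewrite -(ldiv_lmul x); apply: hW.
  by exists 0%N => n _ Wn; apply: none; exists n.
pose Nx x := sval (cid (Wx_once x)).
exists (\max_(x <- l) Nx x) => n Nn /Kl [x xl Wx].
have := @leq_bigmax_seq _ l xpredT Nx x xl isT.
by rewrite /Nx; case: cid => /= N' HN' N'le; apply: HN' (leq_trans N'le Nn) Wx.
Qed.

Lemma uniform_metric_ldiv_compact {R : realType} {d : T -> T -> R} :
  uniform_metric mul inv d -> forall r : R,
  exists K, compact K /\ forall g h, d g h <= r -> K (mul (inv g) h).
Proof.
move=> d_unif r; have [U [cU hU]] := compact_nbhs1.
suff [l Ul] : exists l : seq T, forall g h, d g h <= r ->
    exists2 y, y \in l & U (mul (inv y) (mul (inv g) h)).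
  exists [set z | exists2 y, y \in l & U (mul (inv y) z)].
  by split; [exact: compact_translates | move=> g h /Ul].
apply: contrapT => no_cover.
have escape (l : seq T) : exists p : T * T, d p.1 p.2 <= r /\
    ~ (exists2 y, y \in l & U (mul (inv y) (mul (inv p.1) p.2))).
  apply: contrapT => H; apply: no_cover; exists l => g h dgh.
  by apply: contrapT => H'; apply: H; exists (g, h).
pose pt l := sval (cid (escape l)).
(* [L n] lists the first [n] displacements [a 0], ..., [a n.-1]. *)
pose L := fix L n := if n is n'.+1
  then rcons (L n') (mul (inv (pt (L n')).1) (pt (L n')).2) else [::].
pose g n := (pt (L n)).1; pose h n := (pt (L n)).2.
pose a n := mul (inv (g n)) (h n).
have d_gh n : d (g n) (h n) <= r by rewrite /g /h /pt; case: cid => /= p [].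
have a_new n : ~ (exists2 y, y \in L n & U (mul (inv y) (a n))).
  by rewrite /a /g /h /pt; case: cid => /= p [].
have a_in_L m n : (m < n)%N -> a m \in L n.
  elim: n => [//|n IH]; rewrite ltnS leq_eqVlt => /orP[/eqP ->|mn].
    by rewrite /= mem_rcons mem_head.
  by rewrite /= mem_rcons in_cons (IH mn) orbT.
have a_sep m n : (m < n)%N -> ~ U (mul (inv (a m)) (a n)).
  by move=> mn Uan; apply: (a_new n); exists (a m) => //; exact: a_in_L.
have [N HN] := proj2 (d_unif g h) (separated_seq_escapes hU a_sep) r.
by move: (HN N (leqnn N)); rewrite ltNge d_gh.
Qed.

Lemma compactly_generated_of_chains {R : realType} {d : T -> T -> R} {b K} :
  compact K -> (forall z w, d z w <= b -> K (mul (inv z) w)) ->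
  (forall y, (chain_dist d b e y < +oo)%E) -> compactly_generated mul inv e.
Proof.
move=> cK Kb chains; exists K; split => // H He HM HV KH.
have H_chain l x y : chain_ok d b x y l -> H x -> H y.
  elim: l x => [|z l IH] x /=; first by move=> ->.
  case=> dxz hc Hx; apply: (IH z) => //.
  by rewrite -(mulKV x z); apply: HM => //; apply: KH; apply: Kb.
apply/seteqP; split => // y _.
have [l hl] := chain_of_chain_dist_lt (chains y).
exact: H_chain hl He.
Qed.

Lemma compactly_generated_of_uniform_coarsely_geodesic {R : realType}
    {d : T -> T -> R} :
  uniform_metric mul inv d -> coarsely_geodesic d -> compactly_generated mul inv e.
Proof.
move=> d_unif [b [_ [d_fin _]]].
have [K [cK Kb]] := uniform_metric_ldiv_compact d_unif b.
exact: compactly_generated_of_chains cK Kb (d_fin e).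
Qed.

Lemma compactly_generated_of_uniform_quasi_geodesic {R : realType}
    {d : T -> T -> R} :
  uniform_metric mul inv d -> quasi_geodesic d -> compactly_generated mul inv e.
Proof.
move=> d_unif [b [_ [C [_ dC]]]].
have [K [cK Kb]] := uniform_metric_ldiv_compact d_unif b.
apply: compactly_generated_of_chains cK Kb _ => y.
by apply: le_lt_trans (proj2 (dC e y)) _; exact: ltry.
Qed.

Lemma compactly_generated_of_proper_quasi_geodesic {R : realType}
    {d : T -> T -> R} :
  left_invariant mul d -> proper_metric d -> quasi_geodesic d ->
  compactly_generated mul inv e.
Proof.
move=> d_linv d_prop [b [_ [C [_ dC]]]].
apply: (@compactly_generated_of_chains R d b _ (d_prop e b)) => [z w|y] /=.
  by rewrite -(mulVx z) d_linv.
by apply: le_lt_trans (proj2 (dC e y)) _; exact: ltry.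
Qed.

Lemma compactly_generated_of_graph_qi {R : realType} {d : T -> T -> R}
    {V : Type} {adj : V -> V -> Prop} {F : T -> V} :
  left_invariant mul d -> proper_metric d -> is_graph adj -> qi_to_graph d adj F ->
  compactly_generated mul inv e.
Proof.
move=> d_linv d_prop [adj_sym _] [C [C0 [F_qi F_dense]]].
(* A walk in the graph is lifted to a chain in G by choosing, near each vertex,
   a point whose image is within graph distance C + 1; consecutive points of
   the chain then have images within graph distance 2C + 3, so they are
   b-close. *)
pose b := C * (3 * C + 3).
have walk_close x z k : walk adj k (F x) (F z) -> k%:R <= 2 * C + 3 -> d x z <= b.
  move=> hw hk; have := le_trans (proj1 (F_qi x z)) (graph_dist_le_walk hw).
  rewrite lee_fin => h.
  have -> : d x z = C * (C^-1 * d x z) by rewrite mulrA mulfV ?gt_eqF // mul1r.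
  by rewrite /b; apply: ler_wpM2l; [exact: ltW | lra].
have lift v : exists x k, walk adj k (F x) v /\ k%:R <= C + 1.
  have [x hx] := F_dense v; have [k [hk hk']] := walk_of_graph_dist_le hx.
  by exists x, k.
exists [set y | d e y <= b]; split; first exact: d_prop.
move=> H He HM HV KH.
have H_step x z : d x z <= b -> H x -> H z.
  move=> dxz Hx; rewrite -(mulKV x z); apply: HM => //; apply: KH => /=.
  by rewrite -(mulVx x) d_linv.
have H_walk n u v : walk adj n u v -> forall x k, walk adj k (F x) u ->
    k%:R <= C + 1 -> H x -> forall y k', walk adj k' (F y) v -> k'%:R <= C + 1 -> H y.
  elim=> [w|n' u' w' v' huw hw IH] x k hk hkC Hx y k' hk' hkC'.
    apply: (H_step x y) => //; apply: (walk_close x y (k + k')%N).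
      by apply: walk_cat hk _; apply: walk_rev.
    by rewrite natrD; lra.
  have [z [kz [hz hzC]]] := lift w'.
  apply: (IH z kz hz hzC _ y k' hk' hkC').
  apply: (H_step x z) => //; apply: (walk_close x z (k + (1 + kz))%N).
    apply: walk_cat hk _; apply: walk_cat (walkS huw (walk0 _ _)) _.
    exact: walk_rev.
  by rewrite !natrD; lra.
apply/seteqP; split => // y _.
have [n [hn _]] := walk_of_graph_dist_le (proj2 (F_qi e y)).
by apply: (H_walk n _ _ hn e 0%N (walk0 _ _) _ He y 0%N (walk0 _ _)); lra.
Qed.

Section SetPow.
Context {S : set T}.
Local Notation Sn := (setpow mul e S).

Lemma setpow_mul {n m x y} : Sn n x -> Sn m y -> Sn (n + m) (mul x y).
Proof.
elim=> [|n' s x' Ss hx IH] hy; first by rewrite add0n mul1x.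
by rewrite addSn -mulA; apply: setpowS => //; apply: IH.
Qed.

Lemma setpow1 {s} : S s -> Sn 1 s.
Proof. by move=> Ss; rewrite -(mulx1 s); apply: setpowS => //; exact: setpow0. Qed.

Lemma setpow_inv {n x} : (forall s, S s -> S (inv s)) -> Sn n x -> Sn n (inv x).
Proof.
move=> S_inv; elim=> [|n' s x' Ss hx IH]; first by rewrite inv1; exact: setpow0.
by rewrite invM -addn1; apply: setpow_mul => //; apply: setpow1; exact: S_inv.
Qed.

Lemma setpow_le {n m x} : S e -> (n <= m)%N -> Sn n x -> Sn m x.
Proof.
move=> Se nm hx; elim: m nm => [|m IH]; first by rewrite leqn0 => /eqP <-.
rewrite leq_eqVlt => /orP[/eqP <- //|nm].
by rewrite -(mul1x x); apply: setpowS => //; exact: IH.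
Qed.

Lemma compact_setpow n : compact S -> compact (Sn n).
Proof.
move=> cS; elim: n => [|n IH].
  rewrite (_ : Sn 0 = [set e]); first exact: compact_set1.
  by apply/seteqP; split => x /=; [move=> h; inversion h | move=> ->; exact: setpow0].
rewrite (_ : Sn n.+1 = [set mul a b | a in S & b in Sn n]); first exact: compact_setM.
apply/seteqP; split => x /=; last by case=> a Sa [b hb <-]; apply: setpowS.
by move=> h; inversion h; subst; exists s => //; exists x0.
Qed.

End SetPow.

Lemma compactly_generated_setpow : compactly_generated mul inv e ->
  exists S U : set T, [/\ S e /\ (forall x, S x -> S (inv x)), compact S,
    nbhs e U /\ U `<=` S & forall x, exists n, setpow mul e S n x].
Proof.
case=> K [cK K_gen]; have [U [cU hU]] := compact_nbhs1.
pose S := (K `|` U) `|` inv @` (K `|` U).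
have S_inv x : S x -> S (inv x).
  by move=> [KUx|[y KUy <-]]; [right; exists x | left; rewrite invK].
exists S, U; split.
- by split => //; left; right; exact: nbhs_singleton.
- apply: compactU; first exact: compactU.
  by apply: compact_image; [exact: inv_continuous | exact: compactU].
- by split => // x Ux; left; right.
have gen : [set x | exists n, setpow mul e S n x] = setT.
  apply: K_gen.
  - by exists 0%N; exact: setpow0.
  - by move=> x y [n hx] [m hy]; exists (n + m)%N; exact: setpow_mul.
  - by move=> x [n hx]; exists n; exact: setpow_inv.
  - by move=> x Kx; exists 1%N; apply: setpow1; left; left.
by move=> x; suff : [set x | exists n, setpow mul e S n x] x by []; rewrite gen.
Qed.

Section WordMetric.
Variables (S U : set T).
Hypotheses (Se : S e) (S_inv : forall x, S x -> S (inv x)) (cS : compact S)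
  (hU : nbhs e U) (US : U `<=` S) (S_gen : forall x, exists n, setpow mul e S n x).
Local Notation Sn := (setpow mul e S).

Lemma compact_sub_setpow {A} : compact A -> exists n, A `<=` Sn n.
Proof.
move=> cA.
have [l Al] : exists l : seq nat,
    forall x, A x -> exists2 i, i \in l & interior (Sn i) x.
  apply: (@compact_cover_seq T nat A (fun n => interior (Sn n)) cA).
    by move=> n; exact: open_interior.
  move=> x _; have [n hn] := S_gen x; exists n.+1.
  rewrite /interior /=; apply: filterS (nbhs_lmul x hU) => y /= Uy.
  by rewrite -(mulKV x y) -addn1; apply: setpow_mul => //; apply: setpow1; exact: US.
exists (\max_(i <- l) i) => x /Al [i il Six].
apply: (setpow_le Se _ (nbhs_singleton Six)).
exact: leq_bigmax_seq il isT.
Qed.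

Lemma ex_setpow x : exists n, `[< Sn n x >].
Proof. by have [n hn] := S_gen x; exists n; apply/asboolP. Qed.

Definition word_len x := ex_minn (ex_setpow x).

Lemma word_lenP x : Sn (word_len x) x.
Proof. by rewrite /word_len; case: ex_minnP => m /asboolP. Qed.

Lemma word_len_min {n x} : Sn n x -> (word_len x <= n)%N.
Proof. by rewrite /word_len; case: ex_minnP => m _ hm hx; apply: hm; apply/asboolP. Qed.

Lemma word_len_leP n x : (word_len x <= n)%N <-> Sn n x.
Proof.
split; last exact: word_len_min.
by move=> h; apply: setpow_le h (word_lenP x).
Qed.

Lemma word_len_eq0 x : (word_len x == 0%N) = (x == e).
Proof.
apply/eqP/eqP => [h|->]; first by have := word_lenP x; rewrite h => hx; inversion hx.
by apply/eqP; rewrite -leqn0; apply: word_len_min; exact: setpow0.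
Qed.

Lemma word_len_inv x : word_len (inv x) = word_len x.
Proof.
apply/eqP; rewrite eqn_leq; apply/andP; split; apply: word_len_min.
  exact: setpow_inv (word_lenP x).
by have := setpow_inv S_inv (word_lenP (inv x)); rewrite invK.
Qed.

Lemma word_len_mul x y : (word_len (mul x y) <= word_len x + word_len y)%N.
Proof. by apply: word_len_min; apply: setpow_mul; exact: word_lenP. Qed.

Lemma word_len_gen {s} : S s -> (word_len s <= 1)%N.
Proof. by move=> Ss; apply: word_len_min; exact: setpow1. Qed.

Definition word_dist x y := word_len (mul (inv x) y).

Lemma word_distC x y : word_dist x y = word_dist y x.
Proof. by rewrite /word_dist -word_len_inv invM invK. Qed.

Lemma word_dist_triangle x y z :
  (word_dist x z <= word_dist x y + word_dist y z)%N.
Proof.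
by rewrite /word_dist -[in X in word_len X](mulKV y z) mulA; exact: word_len_mul.
Qed.

Lemma word_distxx x : word_dist x x = 0%N.
Proof. by apply/eqP; rewrite /word_dist mulVx word_len_eq0. Qed.

Lemma word_dist_eq0 x y : word_dist x y = 0%N -> x = y.
Proof. by move/eqP; rewrite word_len_eq0 => /eqP h; rewrite -(mulKV x y) h mulx1. Qed.

Lemma word_dist_lmul g x y : word_dist (mul g x) (mul g y) = word_dist x y.
Proof. by rewrite /word_dist invM -mulA mulK. Qed.

Variable R : realType.

Definition word_metric x y : R := (word_dist x y)%:R.

Lemma word_metric_is_metric : is_metric word_metric.
Proof.
split => [x y|x y|x y|x y z]; rewrite /word_metric.
- exact: ler0n.
- split; last by move=> ->; rewrite word_distxx.
  by move/eqP; rewrite pnatr_eq0 => /eqP; exact: word_dist_eq0.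
- by rewrite word_distC.
- by rewrite -natrD ler_nat; exact: word_dist_triangle.
Qed.

Lemma word_metric_left_invariant : left_invariant mul word_metric.
Proof. by move=> g x y; rewrite /word_metric word_dist_lmul. Qed.

Lemma word_metric_ball x r :
  0 <= r -> [set y | word_metric x y <= r] = mul x @` Sn (Num.truncn r).
Proof.
move=> r0; apply/seteqP; split => y /=.
  rewrite /word_metric /word_dist -truncn_ge_nat // => /word_len_leP h.
  by exists (mul (inv x) y) => //; rewrite mulKV.
case=> z hz <-; rewrite /word_metric /word_dist mulK -truncn_ge_nat //.
exact/word_len_leP.
Qed.

Lemma word_metric_proper : proper_metric word_metric.
Proof.
move=> x r; case: (ltrP r 0) => r0.
  rewrite (_ : [set y | _] = set0); first exact: compact0.
  apply/seteqP; split => y //= h.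
  by have := le_lt_trans (le_trans (ler0n _ _) h) r0; rewrite ltxx.
rewrite word_metric_ball //.
by apply: compact_image; [exact: lmul_continuous | exact: compact_setpow].
Qed.

Lemma word_metric_uniform : uniform_metric mul inv word_metric.
Proof.
move=> g h; split.
  move=> d_large K cK; have [m Km] := compact_sub_setpow cK.
  have [N HN] := d_large m%:R.
  exists N => n Nn /Km /word_len_leP le_m.
  by have := HN n Nn; rewrite /word_metric /word_dist ltr_nat ltnNge le_m.
move=> escape M; have [N HN] := escape _ (compact_setpow (Num.truncn M) cS).
exists N => n Nn; apply: lt_le_trans (truncnS_gt M) _.
rewrite /word_metric /word_dist ler_nat ltnNge.
by apply/negP => /word_len_leP; exact: HN.
Qed.

Lemma word_metric_chain {n a} : Sn n a -> forall x, exists l,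
  chain_ok word_metric 1 x (mul x a) l /\ chain_len word_metric x l <= n%:R.
Proof.
elim=> [|n' s a' Ss ha IH] x; first by exists [::]; rewrite mulx1.
have [l [hl hlen]] := IH (mul x s).
have step : word_metric x (mul x s) <= 1.
  by rewrite /word_metric /word_dist mulK lern1 word_len_gen.
exists (mul x s :: l); split => /=; first by rewrite -mulA in hl.
by rewrite -add1n natrD; apply: lerD.
Qed.

Lemma chain_dist_le_word_metric x y :
  (chain_dist word_metric 1 x y <= (word_metric x y)%:E)%E.
Proof.
have [l [hl hlen]] := word_metric_chain (word_lenP (mul (inv x) y)) x.
rewrite mulKV in hl.
apply: le_trans (ereal_inf_lbound _) _; first by exists l.
by rewrite lee_fin.
Qed.

Lemma word_metric_quasi_geodesic : quasi_geodesic word_metric.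
Proof.
exists 1; split => //; exists 1; split => // x y; split.
  apply/ereal_infP => _ [l hl <-]; rewrite lee_fin invr1 mul1r lerBlDr.
  apply: le_trans (dist_le_chain_len word_metric_is_metric hl) _.
  by rewrite lerDl.
by apply: le_trans (chain_dist_le_word_metric x y) _; rewrite lee_fin mul1r lerDl.
Qed.

Lemma word_metric_coarsely_geodesic : coarsely_geodesic word_metric.
Proof.
exists 1; split => //; split.
  by move=> x y; apply: le_lt_trans (chain_dist_le_word_metric x y) _; exact: ltry.
move=> r; exists r => x y h; apply: le_trans (chain_dist_le_word_metric x y) _.
by rewrite lee_fin.
Qed.

Section Net.
Variable A : set T.
Hypotheses (A_sep : forall x y, A x -> A y -> (word_dist x y <= 2)%N -> x = y)
  (A_net : forall g, exists2 a, A a & (word_dist g a <= 2)%N).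

Definition net_point g : {a | A a} :=
  exist A (s2val (cid2 (A_net g))) (s2valP (cid2 (A_net g))).

Definition net_adj (u v : {a | A a}) : Prop :=
  u <> v /\ (word_dist (sval u) (sval v) <= 5)%N.

Lemma net_point_near g : (word_dist g (sval (net_point g)) <= 2)%N.
Proof. by rewrite /net_point /=; case: cid2. Qed.

Lemma net_eq (u v : {a | A a}) : (word_dist (sval u) (sval v) <= 2)%N -> u = v.
Proof. by case: u v => [u Au] [v Av] /= uv; apply: eq_exist; exact: A_sep. Qed.

Lemma net_is_graph : is_graph net_adj.
Proof.
split; last by move=> v [].
by move=> u v [uv h]; split; [move=> vu; apply: uv | rewrite word_distC].
Qed.

Lemma net_bounded_degree : bounded_degree net_adj.
Proof.
pose W := interior U.
have WS : W `<=` S by move=> z /nbhs_singleton; exact: US.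
have [l Wl] : exists l : seq T,
    forall z, Sn 5 z -> exists2 y, y \in l & W (mul (inv y) z).
  apply: (@compact_cover_seq T T (Sn 5) (fun y => [set z | W (mul (inv y) z)])).
  - exact: compact_setpow.
  - by move=> y; apply: open_lmul_preimage; exact: open_interior.
  - move=> z _; exists z => /=; rewrite mulVx.
    by apply: nbhs_singleton; apply: nbhs_interior.
(* Each translate of W determines at most one neighbour of v, since two points
   of a translate of W are at word distance at most 2. *)
exists (size l) => v.
pose pick (y : T) : {a | A a} := match pselect (exists w, net_adj v w /\
    W (mul (inv y) (mul (inv (sval v)) (sval w)))) with
  | left H => sval (cid H) | right _ => v end.
exists (map pick l); split; first by rewrite size_map.
move=> w [vw hvw].
have [y yl Wy] := Wl _ (proj1 (word_len_leP _ _) hvw).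
suff -> : w = pick y by apply: in_list_map.
rewrite /pick; case: pselect => [H|H]; last by exfalso; apply: H; exists w.
case: (cid H) => w' [_ Ww'] /=; apply: net_eq.
rewrite /word_dist -(ldiv_lmul (sval v)) -(ldiv_lmul y).
apply: word_len_min; rewrite -[2%N]/(1 + 1)%N; apply: setpow_mul.
  by apply: setpow1; apply: S_inv; exact: WS.
by apply: setpow1; exact: WS.
Qed.

Lemma word_dist_net_point x y :
  (word_dist (sval (net_point x)) (sval (net_point y)) <= word_dist x y + 4)%N.
Proof.
have := word_dist_triangle (sval (net_point x)) x (sval (net_point y)).
have := word_dist_triangle x y (sval (net_point y)).
have := net_point_near x; have := net_point_near y.
have := word_distC (sval (net_point x)) x; lia.
Qed.

Lemma walk_net_point {n a} : Sn n a -> forall x,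
  exists m, (m <= n)%N /\ walk net_adj m (net_point x) (net_point (mul x a)).
Proof.
elim=> [|n' s a' Ss ha IH] x.
  by exists 0%N; rewrite mulx1; split => //; exact: walk0.
have [m [mn hw]] := IH (mul x s); rewrite mulA.
case: (pselect (net_point x = net_point (mul x s))) => [->|neq].
  by exists m; split => //; exact: leq_trans mn _.
exists m.+1; split => //; apply: walkS hw; split => //.
have : (word_dist x (mul x s) <= 1)%N by rewrite /word_dist mulK word_len_gen.
have := word_dist_net_point x (mul x s); lia.
Qed.

Lemma word_dist_le_walk {n u v} :
  walk net_adj n u v -> (word_dist (sval u) (sval v) <= 5 * n)%N.
Proof.
elim=> [w|n' u' w' v' [_ huw] hw IH]; first by rewrite word_distxx.
have := word_dist_triangle (sval u') (sval w') (sval v'); lia.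
Qed.

Lemma net_qi : qi_to_graph word_metric net_adj net_point.
Proof.
exists 5; split => //; split => [x y|v]; first split.
- apply: graph_dist_ge => m hm.
  have : (word_dist x y <= 5 * m + 4)%N.
    have := word_dist_le_walk hm.
    have := word_dist_triangle x (sval (net_point x)) y.
    have := word_dist_triangle (sval (net_point x)) (sval (net_point y)) y.
    have := net_point_near x; have := net_point_near y.
    rewrite [word_dist (sval (net_point y)) y]word_distC; lia.
  move=> le_m; rewrite lee_fin /word_metric.
  have : ((word_dist x y)%:R <= 5 * m%:R + 4 :> R).
    by rewrite -[5]/(5%:R) -[4]/(4%:R) -natrM -natrD ler_nat.
  lra.
- have [m [mn hw]] := walk_net_point (word_lenP (mul (inv x) y)) x.
  rewrite mulKV in hw.
  apply: le_trans (graph_dist_le_walk hw) _; rewrite lee_fin /word_metric.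
  have : (m%:R <= (word_dist x y)%:R :> R) by rewrite ler_nat.
  have := ler0n R (word_dist x y); lra.
- exists (sval v); case: (pselect (net_point (sval v) = v)) => [->|neq].
    by apply: le_trans (graph_dist_le_walk (walk0 _ _)) _; rewrite lee_fin ler0n.
  apply: le_trans (graph_dist_le_walk (walkS _ (walk0 _ _))) _.
    split => //; rewrite word_distC; exact: leq_trans (net_point_near (sval v)) _.
  by rewrite lee_fin; lra.
Qed.

End Net.

Lemma word_metric_graph_qi : exists (V : Type) (adj : V -> V -> Prop) (F : T -> V),
  [/\ is_graph adj, bounded_degree adj & qi_to_graph word_metric adj F].
Proof.
have close_refl x : (word_dist x x <= 2)%N by rewrite word_distxx.
have close_sym x y : (word_dist x y <= 2)%N -> (word_dist y x <= 2)%N.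
  by rewrite word_distC.
have [A [A_sep A_net]] := maximal_net close_refl close_sym.
exists {a | A a}, (net_adj A), (@net_point A A_net); split.
- exact: net_is_graph.
- exact: net_bounded_degree.
- exact: net_qi.
Qed.

Lemma word_metric_spec :
  [/\ is_metric word_metric, uniform_metric mul inv word_metric,
      coarsely_geodesic word_metric, quasi_geodesic word_metric &
      [/\ left_invariant mul word_metric, proper_metric word_metric &
      exists (V : Type) (adj : V -> V -> Prop) (F : T -> V),
        [/\ is_graph adj, bounded_degree adj & qi_to_graph word_metric adj F]]].
Proof.
split; last split.
- exact: word_metric_is_metric.
- exact: word_metric_uniform.
- exact: word_metric_coarsely_geodesic.
- exact: word_metric_quasi_geodesic.
- exact: word_metric_left_invariant.
- exact: word_metric_proper.
- exact: word_metric_graph_qi.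
Qed.

End WordMetric.

Lemma word_metric_of_compactly_generated (R : realType) :
  compactly_generated mul inv e -> exists d : T -> T -> R,
  [/\ is_metric d, uniform_metric mul inv d, coarsely_geodesic d, quasi_geodesic d &
      [/\ left_invariant mul d, proper_metric d &
      exists (V : Type) (adj : V -> V -> Prop) (F : T -> V),
        [/\ is_graph adj, bounded_degree adj & qi_to_graph d adj F]]].
Proof.
case/compactly_generated_setpow => S [U [[Se S_inv] cS [hU US] S_gen]].
by eexists; exact: (@word_metric_spec S U Se S_inv cS hU US S_gen R).
Qed.

End LocallyCompactGroup.

Theorem proposition6p4 (R : realType) (T : topologicalType)
    (mul : T -> T -> T) (inv : T -> T) (e : T) :
  is_lc_group mul inv e ->
  let P1 := exists d : T -> T -> R,
      [/\ is_metric d, uniform_metric mul inv d & coarsely_geodesic d] in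
  let P2 := exists d : T -> T -> R,
      [/\ is_metric d, uniform_metric mul inv d & quasi_geodesic d] in
  let P3 := exists d : T -> T -> R,
      [/\ is_metric d, left_invariant mul d, proper_metric d & quasi_geodesic d] in
  let P4 := exists d : T -> T -> R,
      [/\ is_metric d, left_invariant mul d & proper_metric d] /\
      exists (V : Type) (adj : V -> V -> Prop) (F : T -> V),
        [/\ is_graph adj, bounded_degree adj & qi_to_graph d adj F] in
  let P5 := compactly_generated mul inv e in
  [/\ P1 <-> P5, P2 <-> P5, P3 <-> P5 & P4 <-> P5].
Proof.
move=> HG P1 P2 P3 P4 P5.
have word := word_metric_of_compactly_generated HG R.
split; split.
- case=> d [_ d_unif d_cg].
  exact: (compactly_generated_of_uniform_coarsely_geodesic HG d_unif d_cg).
- by case/word => d [d_met d_unif d_cg _ _]; exists d.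
- case=> d [_ d_unif d_qg].
  exact: (compactly_generated_of_uniform_quasi_geodesic HG d_unif d_qg).
- by case/word => d [d_met d_unif _ d_qg _]; exists d.
- case=> d [_ d_linv d_prop d_qg].
  exact: (compactly_generated_of_proper_quasi_geodesic HG d_linv d_prop d_qg).
- by case/word => d [d_met _ _ d_qg [d_linv d_prop _]]; exists d.
- case=> d [[_ d_linv d_prop] [V [adj [F [adj_graph _ F_qi]]]]].
  exact: (compactly_generated_of_graph_qi HG d_linv d_prop adj_graph F_qi).
- by case/word => d [d_met _ _ _ [d_linv d_prop graph]]; exists d.
Qed.
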